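(* For $n\in\{0,1,2,\dots\}$ let \[ b_n=\frac14\frac{(-1)^n}{n!}\sum_{k=0}^{n}(-1)^kS(n,k)(2k-1)!!,\qquad d_n=\frac{(-1)^n}{n!}\sum_{k=0}^{n}(-1)^kS(n,k)(2k-3)!!, \] so that $d_0=-1$, $d_1=1$, $d_2=0$, $d_3=\frac16$, $b_0=b_1=b_2=\frac14$, and $b_3=\frac7{24}$. For $n\in\mathbb{N}$ let $D^{(n)}=(D_{ij})_{1\le i,j\le n}$ be the $n\times n$ matrix with $D_{ij}=d_{i-j+1}$ if $j\le i$, $D_{i,i+1}=-1$, and $D_{ij}=0$ if $j\ge i+2$. Let $B^{(n)}=(B_{ij})_{1\le i,j\le n}$ be the $n\times n$ matrix with $B_{ij}=b_{i-j+1}$ if $j\le i+1$ and $B_{ij}=0$ if $j\ge i+2$. Then for every $n\in\mathbb{N}$, \[ b_n=\frac14\det D^{(n)}\qquad\text{and}\qquad d_n=(-1)^{n-1}4^n\det B^{(n)}. \]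
   Context: $S(n,k)$ are the Stirling numbers of the second kind, given by $\frac{(e^x-1)^k}{k!}=\sum_{n\ge k}S(n,k)\frac{x^n}{n!}$. Double factorials: $(2j-1)!!=1\cdot3\cdots(2j-1)$ for $j\ge1$, and $[-(2j+1)]!!=(-1)^j/(2j-1)!!$ for $j\ge0$, so $(-1)!!=1$ and $(-3)!!=-1$. *)

From mathcomp Require Import all_boot all_order all_algebra.
Set Implicit Arguments. Unset Strict Implicit. Unset Printing Implicit Defensive.
Import Order.TTheory GRing.Theory Num.Theory.
Local Open Scope ring_scope.

Fixpoint stirling2 (n k : nat) : nat :=
  match n, k with
  | 0, 0 => 1
  | 0, _.+1 => 0
  | _.+1, 0 => 0
  | n'.+1, k'.+1 => k'.+1 * stirling2 n' k'.+1 + stirling2 n' k'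
  end%N.

Definition oddfact (j : nat) : rat := \prod_(i < j) (2 * i + 1)%:R.

(* dfo m = (2m-1)!! for an integer m, with the convention
   [-(2j+1)]!! = (-1)^j / (2j-1)!!  for j >= 0. *)
Definition dfo (m : int) : rat :=
  match m with
  | Posz j => oddfact j
  | Negz j => (-1) ^+ j.+1 / oddfact j.+1   (* m = -(j+1), so 2m-1 = -(2(j+1)+1) *)
  end.

Definition bcoef (n : nat) : rat :=
  4^-1 * ((-1) ^+ n / (n`!)%:R) *
  \sum_(k < n.+1) (-1) ^+ k * (stirling2 n k)%:R * dfo (k%:Z).

Definition dcoef (n : nat) : rat :=
  ((-1) ^+ n / (n`!)%:R) *
  \sum_(k < n.+1) (-1) ^+ k * (stirling2 n k)%:R * dfo (k%:Z - 1).

(* D^(n), with 0-based indices i,j : 'I_n (paper's i+1, j+1):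
   D_ij = d_{i-j+1} if j <= i, -1 if j = i+1, 0 if j >= i+2. *)
Definition Dmat (n : nat) : 'M[rat]_n :=
  \matrix_(i < n, j < n)
    if (j <= i)%N then dcoef (i - j + 1)%N
    else if j == i.+1 :> nat then -1 else 0.

Definition Bmat (n : nat) : 'M[rat]_n :=
  \matrix_(i < n, j < n)
    if (j <= i.+1)%N then bcoef (i.+1 - j)%N else 0.

From mathcomp Require Import all_boot all_order all_algebra.
From mathcomp Require Import ring.
Set Implicit Arguments. Unset Strict Implicit. Unset Printing Implicit Defensive.
Import Order.TTheory GRing.Theory Num.Theory.
Local Open Scope ring_scope.

(* Since \sum_n S(n,k) x^n / n! = (e^x - 1)^k / k!, the sums defining b_n and
   d_n are the Taylor coefficients of F(1 - e^-x) for F(u) = (1 - 2u)^(-1/2) / 4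
   and F(u) = -(1 - 2u)^(1/2).  Substituting u = 1 - e^-x is multiplicative and
   the product of these two F is -1/4, so \sum_k b_k d_(n-k) = 0 for n > 0.
   Expanding along the first row, the determinants of the lower Hessenberg
   Toeplitz matrices of a series a satisfy the recurrence imposed by
   "a c is constant" on the coefficients of c, which gives det D^(n) = 4 b_n
   and det B^(n) = -(-4)^-n d_n. *)

Lemma stirling2_small n k : (n < k)%N -> stirling2 n k = 0%N.
Proof. by elim: n k => [|n IHn] [|k] //= ltnk; rewrite !IHn ?muln0 // ltnW. Qed.

Section Cauchy.

Variable R : comPzRingType.
Implicit Types f g : nat -> R.

Definition cauchy f g n : R := \sum_(a < n.+1) f a * g (n - a)%N.
Definition sderiv f n : R := n.+1%:R * f n.+1.
Definition sxderiv f n : R := n%:R * f n.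

Lemma cauchy_ext f f' g g' : f =1 f' -> g =1 g' -> cauchy f g =1 cauchy f' g'.
Proof. by move=> eqf eqg n; apply: eq_bigr => a _; rewrite eqf eqg. Qed.

Lemma cauchyZl c f g n : cauchy (fun k => c * f k) g n = c * cauchy f g n.
Proof. by rewrite /cauchy mulr_sumr; apply: eq_bigr => a _; rewrite mulrA. Qed.

Lemma cauchyC f g n : cauchy f g n = cauchy g f n.
Proof.
rewrite /cauchy (reindex_inj rev_ord_inj) /=; apply: eq_bigr => a _.
by rewrite subSS (subKn (leq_ord a)) mulrC.
Qed.

Lemma sderiv_cauchy f g n :
  sderiv (cauchy f g) n = cauchy (sderiv f) g n + cauchy f (sderiv g) n.
Proof.
rewrite /sderiv /cauchy mulr_sumr.
rewrite (eq_bigr (fun a : 'I_n.+2 => a%:R * f a * g (n.+1 - a)%N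
   + (n.+1 - a)%:R * f a * g (n.+1 - a)%N)); last first.
  by move=> a _; rewrite -!mulrDl -natrD (subnKC (leq_ord a)) mulrA.
rewrite big_split /=; congr (_ + _).
  by rewrite big_ord_recl /= !mul0r add0r.
rewrite big_ord_recr /= subnn !mul0r addr0.
by apply: eq_bigr => a _; rewrite (subSn (leq_ord a)) mulrCA mulrA.
Qed.

Lemma sxderiv_cauchy f g n :
  sxderiv (cauchy f g) n = cauchy (sxderiv f) g n + cauchy f (sxderiv g) n.
Proof.
rewrite /sxderiv /cauchy mulr_sumr -big_split /=; apply: eq_bigr => a _.
have -> : n%:R = a%:R + (n - a)%:R :> R by rewrite -natrD (subnKC (leq_ord a)).
ring.
Qed.

End Cauchy.

Section StirlingTransform.

Variable R : numFieldType.
Implicit Types f g : nat -> R.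

(* (1 - l x) F' = c F and (1 - l x) G' = - c G force (1 - l x) (F G)' = 0. *)
Lemma cauchy_binomialS_eq0 f g l c :
    (forall k, sderiv f k = (l * k%:R + c) * f k) ->
    (forall k, sderiv g k = (l * k%:R - c) * g k) ->
  forall n, cauchy f g n.+1 = 0.
Proof.
move=> Df Dg.
have rec n : n.+1%:R * cauchy f g n.+1 = l * n%:R * cauchy f g n.
  rewrite -[LHS]/(sderiv (cauchy f g) n) sderiv_cauchy /cauchy -big_split.
  rewrite mulr_sumr; apply: eq_bigr => a _ /=.
  have -> : n%:R = a%:R + (n - a)%:R :> R by rewrite -natrD (subnKC (leq_ord a)).
  by rewrite Df Dg; ring.
elim=> [|n IHn]; first by have := rec 0%N; rewrite mulr0 mul0r mul1r.
by have /eqP := rec n.+1; rewrite IHn mulr0 mulf_eq0 pnatr_eq0 => /eqP.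
Qed.

Lemma natr_fact_neq0 n : n`!%:R != 0 :> R.
Proof. by rewrite pnatr_eq0 -lt0n fact_gt0. Qed.

(* [stirling_coef n k] is the coefficient of x^n in (1 - e^-x)^k, so that
   [stirling_transform f] is the coefficient sequence of F(1 - e^-x),
   F = \sum_k f k x^k. *)
Definition stirling_coef n k : R :=
  k`!%:R * (-1) ^+ (n + k) * (stirling2 n k)%:R / n`!%:R.
Definition stirling_transform f n : R :=
  \sum_(k < n.+1) f k * stirling_coef n k.
Definition sderiv_1mx f n : R := sderiv f n - sxderiv f n.

Lemma stirling_coef_small n k : (n < k)%N -> stirling_coef n k = 0.
Proof. by move=> ltnk; rewrite /stirling_coef stirling2_small // mulr0 mul0r. Qed.

Lemma stirling_coefS n k :
  n.+1%:R * stirling_coef n.+1 k = k%:R * (stirling_coef n k.-1 - stirling_coef n k).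
Proof.
case: k => [|k]; first by rewrite /stirling_coef /= mulr0 !mul0r mulr0.
rewrite /stirling_coef /= !factS !natrM natrD natrM !addSn !addnS !exprS.
by field; rewrite natr_fact_neq0 nat1r pnatr_eq0.
Qed.

Lemma stirling_transform_ext f g : f =1 g -> stirling_transform f =1 stirling_transform g.
Proof. by move=> eqfg n; apply: eq_bigr => k _; rewrite eqfg. Qed.

Lemma stirling_transformD f g n :
  stirling_transform (fun k => f k + g k) n =
  stirling_transform f n + stirling_transform g n.
Proof. by rewrite -big_split; apply: eq_bigr => k _; rewrite mulrDl. Qed.

Lemma stirling_transform0 f : stirling_transform f 0 = f 0%N.
Proof. by rewrite /stirling_transform big_ord1 /stirling_coef fact0 /= divr1 !mulr1. Qed.

Lemma stirling_transformS_eq0 f :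
  (forall k, f k.+1 = 0) -> forall n, stirling_transform f n.+1 = 0.
Proof.
move=> fS0 n; rewrite /stirling_transform big_ord_recl big1 => [|k _].
  by rewrite /stirling_coef /= mulr0 mul0r mulr0 add0r.
by rewrite fS0 mul0r.
Qed.

(* Chain rule: the derivative of F(u), u = 1 - e^-x, is e^-x F'(u) = (1 - u) F'(u). *)
Lemma sderiv_stirling_transform f n :
  sderiv (stirling_transform f) n = stirling_transform (sderiv_1mx f) n.
Proof.
rewrite /sderiv /stirling_transform mulr_sumr.
rewrite (eq_bigr (fun k : 'I_n.+2 =>
    k%:R * f k * (stirling_coef n k.-1 - stirling_coef n k))); last first.
  by move=> k _; rewrite mulrCA stirling_coefS mulrA (mulrC (f k)).
rewrite big_ord_recl /= mul0r mul0r add0r.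
rewrite (eq_bigr (fun k : 'I_n.+1 => sderiv f k * stirling_coef n k
    - sderiv f k * stirling_coef n k.+1)); last first.
  by move=> k _; rewrite /sderiv mulrBr.
rewrite sumrB [RHS](eq_bigr _ (fun k _ => mulrBl _ _ _)) sumrB; congr (_ - _).
rewrite big_ord_recr big_ord_recl /= stirling_coef_small // mulr0 addr0.
by rewrite /sxderiv !mul0r add0r.
Qed.

Lemma sderiv_1mx_cauchy f g n :
  sderiv_1mx (cauchy f g) n =
  cauchy (sderiv_1mx f) g n + cauchy f (sderiv_1mx g) n.
Proof.
rewrite /sderiv_1mx sderiv_cauchy sxderiv_cauchy opprD addrACA /cauchy.
by rewrite -!sumrB -!big_split; apply: eq_bigr => a _ /=; ring.
Qed.

Lemma stirling_transform_cauchy n f g :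
  cauchy (stirling_transform f) (stirling_transform g) n =
  stirling_transform (cauchy f g) n.
Proof.
elim: n f g => [|n IHn] f g.
  by rewrite /cauchy big_ord1 !stirling_transform0 big_ord1.
have n1_neq0 : n.+1%:R != 0 :> R by rewrite pnatr_eq0.
apply: (mulfI n1_neq0).
rewrite -[LHS]/(sderiv (cauchy _ _) n) -[RHS]/(sderiv (stirling_transform _) n).
rewrite sderiv_cauchy (cauchy_ext (sderiv_stirling_transform f) (frefl _)).
rewrite (cauchy_ext (frefl _) (sderiv_stirling_transform g)) !IHn.
rewrite -stirling_transformD sderiv_stirling_transform.
by apply: stirling_transform_ext => k; rewrite sderiv_1mx_cauchy.
Qed.

End StirlingTransform.

Section HessenbergToeplitz.

Variable R : comPzRingType.
Implicit Types a v : nat -> R.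

Definition htoeplitz_mx a n : 'M[R]_n :=
  \matrix_(i < n, j < n) if (j <= i.+1)%N then a (i.+1 - j)%N else 0.

Definition htoeplitz_col_mx v a n : 'M[R]_n :=
  \matrix_(i < n, j < n)
    if j == 0%N :> nat then v i else if (j <= i.+1)%N then a (i.+1 - j)%N else 0.

Lemma det_htoeplitz_col_mxSS v a n :
  \det (htoeplitz_col_mx v a n.+2) =
  v 0%N * \det (htoeplitz_mx a n.+1)
  - a 0%N * \det (htoeplitz_col_mx (fun i => v i.+1) a n.+1).
Proof.
rewrite (expand_det_row _ ord0) !big_ord_recl big1 => [|j _]; last first.
  by rewrite mxE /= mul0r.
rewrite addr0 !mxE /= subnn; congr (_ + _).
  rewrite /cofactor /= expr0 mul1r; congr (_ * \det _).
  by apply/matrixP => i j; rewrite !mxE /= /bump /= !add1n subSS.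
rewrite /cofactor /bump /= expr1 mulN1r mulrN; congr (- (_ * \det _)).
by apply/matrixP => i [[|j] lt_j_n1]; rewrite !mxE /= /bump.
Qed.

Lemma det_htoeplitz_col_mx v a n :
  \det (htoeplitz_col_mx v a n.+1) =
  \sum_(k < n.+1) (- a 0%N) ^+ k * v k * \det (htoeplitz_mx a (n - k)).
Proof.
elim: n v => [|n IHn] v.
  rewrite [htoeplitz_col_mx _ _ _]mx11_scalar det_scalar1 mxE big_ord1.
  by rewrite det_mx00 mul1r mulr1.
rewrite det_htoeplitz_col_mxSS IHn [RHS]big_ord_recl subn0 expr0 mul1r.
congr (_ + _); rewrite mulr_sumr -sumrN; apply: eq_bigr => k _.
by rewrite /= /bump add1n subSS exprS; ring.
Qed.

Lemma det_htoeplitz_mx a c :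
  (forall n, cauchy a c n.+1 = 0) ->
  forall n, c 0%N * \det (htoeplitz_mx a n) = (- a 0%N) ^+ n * c n.
Proof.
move=> ac_const; elim/ltn_ind => -[_|n IHn]; first by rewrite det_mx00 mulr1 mul1r.
have -> : htoeplitz_mx a n.+1 = htoeplitz_col_mx (fun i => a i.+1) a n.+1.
  by apply/matrixP => i j; rewrite !mxE; case: eqP => [->|].
rewrite det_htoeplitz_col_mx mulr_sumr.
rewrite (eq_bigr (fun k : 'I_n.+1 => (- a 0%N) ^+ n * (a k.+1 * c (n - k)%N))); last first.
  move=> k _; rewrite mulrCA IHn; last by rewrite ltnS leq_subr.
  have -> : (- a 0%N) ^+ n = (- a 0%N) ^+ k * (- a 0%N) ^+ (n - k).
    by rewrite -exprD (subnKC (leq_ord k)).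
  ring.
have sum_ac : \sum_(k < n.+1) a k.+1 * c (n - k)%N = - (a 0%N * c n.+1).
  by have /eqP := ac_const n; rewrite /cauchy big_ord_recl addrC addr_eq0 => /eqP.
by rewrite -mulr_sumr sum_ac exprS; ring.
Qed.

End HessenbergToeplitz.

(* Taylor coefficients of (1 - 2x)^(-1/2) and -(1 - 2x)^(1/2). *)
Definition isqrt_coef k : rat := dfo k%:Z / k`!%:R.
Definition nsqrt_coef k : rat := dfo (k%:Z - 1) / k`!%:R.

Lemma PoszS_sub1 k : k.+1%:Z - 1 = k%:Z.
Proof. by rewrite -addn1 PoszD addrK. Qed.

Lemma dfo_pred k : dfo k%:Z = (2 * k%:R - 1) * dfo (k%:Z - 1).
Proof.
case: k => [|k]; first by rewrite /dfo /oddfact /= big_ord0 big_ord1 /= divr1; ring.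
rewrite PoszS_sub1 /= /oddfact big_ord_recr /= mulrC natrD natrM.
by congr (_ * _); ring.
Qed.

Lemma sderiv_isqrt_coef k : sderiv isqrt_coef k = (2 * k%:R + 1) * isqrt_coef k.
Proof.
rewrite /sderiv /isqrt_coef dfo_pred PoszS_sub1 factS natrM.
by field; rewrite natr_fact_neq0 nat1r pnatr_eq0.
Qed.

Lemma sderiv_nsqrt_coef k : sderiv nsqrt_coef k = (2 * k%:R - 1) * nsqrt_coef k.
Proof.
rewrite /sderiv /nsqrt_coef PoszS_sub1 dfo_pred factS natrM.
by field; rewrite natr_fact_neq0 nat1r pnatr_eq0.
Qed.

Lemma bcoefE : bcoef =1 (fun n => 4^-1 * stirling_transform isqrt_coef n).
Proof.
move=> n; rewrite /bcoef /stirling_transform -mulrA mulr_sumr; congr (_ * _).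
apply: eq_bigr => k _; rewrite /isqrt_coef /stirling_coef exprD.
by field; rewrite !natr_fact_neq0.
Qed.

Lemma dcoefE : dcoef =1 stirling_transform nsqrt_coef.
Proof.
move=> n; rewrite /dcoef /stirling_transform mulr_sumr; apply: eq_bigr => k _.
rewrite /nsqrt_coef /stirling_coef exprD.
by field; rewrite !natr_fact_neq0.
Qed.

Lemma bcoef0 : bcoef 0 = 4^-1.
Proof. by rewrite bcoefE stirling_transform0 /isqrt_coef /= /oddfact big_ord0 fact0 divr1. Qed.

Lemma dcoef0 : dcoef 0 = -1.
Proof. by rewrite dcoefE stirling_transform0 /nsqrt_coef /= /oddfact big_ord1 fact0 /= !divr1. Qed.

Lemma cauchy_bcoef_dcoef n : cauchy bcoef dcoef n.+1 = 0.
Proof.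
rewrite (cauchy_ext bcoefE dcoefE) cauchyZl stirling_transform_cauchy.
rewrite stirling_transformS_eq0 ?mulr0 // => k.
exact: (cauchy_binomialS_eq0 sderiv_isqrt_coef sderiv_nsqrt_coef).
Qed.

Lemma cauchy_dcoef_bcoef n : cauchy dcoef bcoef n.+1 = 0.
Proof. by rewrite cauchyC cauchy_bcoef_dcoef. Qed.

Lemma DmatE n : Dmat n = htoeplitz_mx dcoef n.
Proof.
apply/matrixP => i j; rewrite !mxE.
case: (ltngtP j i.+1) => [lt_j_i1 | lt_i1_j | ->].
- have le_ji : (j <= i)%N by rewrite -ltnS.
  by rewrite le_ji addn1 subSn.
- by rewrite leqNgt (ltnW lt_i1_j).
- by rewrite ltnn subnn dcoef0.
Qed.

Theorem theorem6p5 (n : nat) (hn : (0 < n)%N) :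
  bcoef n = 4^-1 * \det (Dmat n) /\
  dcoef n = (-1) ^+ n.-1 * 4 ^+ n * \det (Bmat n).
Proof.
split.
  have := det_htoeplitz_mx cauchy_dcoef_bcoef n.
  by rewrite bcoef0 dcoef0 opprK expr1n mul1r DmatE => ->.
case: n hn => // m _.
have := det_htoeplitz_mx cauchy_bcoef_dcoef m.+1.
rewrite dcoef0 bcoef0 mulN1r -invrN exprVn => /(canRL (@opprK _)) detB.
have -> : (-1) ^+ m * 4 ^+ m.+1 = - (- 4) ^+ m.+1 :> rat.
  by rewrite (exprNn 4) !exprS; ring.
by rewrite detB; field; rewrite expf_neq0.
Qed.
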